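(* Consider a state-dependent discrete memoryless channel $W_{Y,Z|X,S}$ with finite alphabets, i.i.d. state distribution $Q_S$, innocent symbol $x_0$, and strictly causal channel state information available only at the transmitter (encoder $X_i=f_i(M,S^{i-1})$, decoder $Y^n\mapsto\hat M$). Let $\mathcal D$ be the set of joint pmfs $P_{S,X,Y,Z}=Q_SP_XW_{Y,Z|X,S}$ such that $P_Z=Q_0$ and $\mathbb I(X;Y)>\mathbb I(X;Z)$. Let $\mathcal S=\{R\ge0:\exists P\in\mathcal D\text{ with }R\le\mathbb I(X;Y)\}$. Then the covert capacity satisfies $C_{\mathrm{SC\text{-}T}}\ge\max\{x:x\in\mathcal S\}$.
   Context: Finite alphabets $\mathcal S,\mathcal X,\mathcal Y,\mathcal Z$. The channel has transition pmf $W_{Y,Z|X,S}$: input $X$, state $S$, output $Y$ at the legitimate receiver and output $Z$ at an adversary (warden). The state sequence $S^n$ is i.i.d. with pmf $Q_S$ and independent of the message; neither the legitimate receiver nor the warden knows the state. $x_0\in\mathcal X$ is a fixed innocent symbol, and $Q_0(z)=\sum_{s}Q_S(s)W_{Z|X,S}(z|x_0,s)$, assumed to have full support on $\mathcal Z$. A $(2^{nR},n)$ code consists of a message $M$ uniform on $\{1,\dots,2^{nR}\}$, an encoder and a decoder of the type specified. $P_{Z^n}$ denotes the distribution of the warden's output induced by the code. A rate $R$ is achievable if there is a sequence of $(2^{nR},n)$ codes with $\mathbb P(\hat M\ne M)\to 0$ and $\mathbb D(P_{Z^n}\|Q_0^{\otimes n})\to 0$ as $n\to\infty$; the covert capacity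 is the supremum of achievable rates. Mutual informations are computed under the indicated joint pmf. *)

From HB Require Import structures.
From mathcomp Require Import all_boot all_order all_algebra.
From mathcomp Require Import all_classical all_reals.
From mathcomp Require Import ereal topology normedtype sequences exp.
Set Implicit Arguments. Unset Strict Implicit. Unset Printing Implicit Defensive.
Import Order.TTheory GRing.Theory Num.Theory.
Import numFieldNormedType.Exports.
Local Open Scope ring_scope.
Local Open Scope classical_set_scope.

Section Covert.
Variables (R : realType) (S X Y Z : finType).

Definition is_pmf (T : finType) (P : T -> R) :=
  (forall t, 0 <= P t) /\ \sum_(t : T) P t = 1.

(* channel W x s y z = W_{Y,Z|X,S}(y,z|x,s) *)
Definition is_channel (W : X -> S -> Y -> Z -> R) :=
  forall x s, (forall y z, 0 <= W x s y z) /\ \sum_(y : Y) \sum_(z : Z) W x s y z = 1.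

Definition log2 (r : R) : R := ln r / ln 2.

Definition mutinfo (A B : finType) (PAB : A -> B -> R) : R :=
  let PA a := \sum_(b : B) PAB a b in
  let PB b := \sum_(a : A) PAB a b in
  \sum_(a : A) \sum_(b : B)
     (if PAB a b == 0 then 0 else PAB a b * log2 (PAB a b / (PA a * PB b))).

(* Kullback-Leibler divergence in nats, convention 0 log(0/q) = 0 *)
Definition KL (T : finType) (P Q : T -> R) : R :=
  \sum_(t : T) (if P t == 0 then 0 else P t * ln (P t / Q t)).

Variables (QS : S -> R) (W : X -> S -> Y -> Z -> R) (x0 : X).

Definition Q0 (z : Z) : R := \sum_(s : S) QS s * \sum_(y : Y) W x0 s y z.

Definition PXY (PX : X -> R) (x : X) (y : Y) : R :=
  \sum_(s : S) \sum_(z : Z) QS s * PX x * W x s y z.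
Definition PXZ (PX : X -> R) (x : X) (z : Z) : R :=
  \sum_(s : S) \sum_(y : Y) QS s * PX x * W x s y z.
Definition PZ (PX : X -> R) (z : Z) : R := \sum_(x : X) PXZ PX x z.

(* the set D (parametrised by P_X, since P = Q_S P_X W) *)
Definition setD (PX : X -> R) : Prop :=
  is_pmf PX /\ (forall z, PZ PX z = Q0 z) /\
  mutinfo (PXZ PX) < mutinfo (PXY PX).

Definition setS : set R :=
  [set r | 0 <= r /\ exists PX, setD PX /\ r <= mutinfo (PXY PX)].

(* (M, n) code with strictly causal state information at the transmitter:
   X_i = enc i m s^n where enc i m s depends only on s_0 .. s_{i-1}. *)
Record sc_code (n M : nat) := SCCode {
  enc : 'I_n -> 'I_M -> {ffun 'I_n -> S} -> X;
  dec : {ffun 'I_n -> Y} -> 'I_M;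
  enc_causal : forall (i : 'I_n) (m : 'I_M) (s s' : {ffun 'I_n -> S}),
      (forall j : 'I_n, (j < i)%N -> s j = s' j) -> enc i m s = enc i m s' }.

Definition code_joint n M (c : sc_code n M) (m : 'I_M) (s : {ffun 'I_n -> S})
    (y : {ffun 'I_n -> Y}) (z : {ffun 'I_n -> Z}) : R :=
  M%:R^-1 * \prod_(i : 'I_n) (QS (s i) * W (enc c i m s) (s i) (y i) (z i)).

Definition err_prob n M (c : sc_code n M) : R :=
  \sum_(m : 'I_M) \sum_(s : {ffun 'I_n -> S}) \sum_(y : {ffun 'I_n -> Y})
     \sum_(z : {ffun 'I_n -> Z}) (if dec c y != m then code_joint c m s y z else 0).

Definition PZn n M (c : sc_code n M) (z : {ffun 'I_n -> Z}) : R :=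
  \sum_(m : 'I_M) \sum_(s : {ffun 'I_n -> S}) \sum_(y : {ffun 'I_n -> Y})
     code_joint c m s y z.

Definition Q0n n (z : {ffun 'I_n -> Z}) : R := \prod_(i : 'I_n) Q0 (z i).

Definition achievable (r : R) : Prop :=
  exists (Mn : nat -> nat) (c : forall n, sc_code n (Mn n)),
    (forall n, 2 `^ (n%:R * r) <= (Mn n)%:R) /\
    ((fun n => err_prob (c n)) @ \oo --> (0 : R)) /\
    ((fun n => KL (PZn (c n)) (@Q0n n)) @ \oo --> (0 : R)).

Definition covert_capacity : \bar R := ereal_sup [set r%:E | r in achievable].

End Covert.

From HB Require Import structures.
From mathcomp Require Import all_boot all_order all_algebra.
From mathcomp Require Import all_classical all_reals.
From mathcomp Require Import ereal topology normedtype sequences exp.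
From mathcomp Require Import lra ring.
Import Order.TTheory GRing.Theory Num.Theory.
Import numFieldNormedType.Exports.
Local Open Scope ring_scope.
Local Open Scope classical_set_scope.

(* Random coding that ignores the state information.  Draw [M ~ 2^(n r)]
   codewords i.i.d. from [PX^n], with [I(X;Z) < r < I(X;Y)], and decode by a
   threshold test on the information density.  Averaged over the codebook,
   the error probability is at most a Chernoff bound on the atypical event
   plus [M / K], and the divergence [D(P_Z^n || Q0^n)] is controlled by the
   soft-covering argument, using [P_Z = Q0]; for a suitable threshold [K]
   both decay geometrically in [n].  Some codebook does as well as the
   average, so every rate below [I(X;Y)] is achievable. *)

Lemma mulr_neq0_gt0 {R : numDomainType} {a b : R} :
  0 <= a -> 0 <= b -> a * b != 0 -> 0 < a /\ 0 < b.
Proof.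
rewrite !le0r => /orP[/eqP->|a0] /orP[/eqP->|b0]; rewrite ?mul0r ?mulr0 ?eqxx //.
Qed.

Section RealInequalities.
Context {R : realType}.

Lemma ln_le_sub1 (t : R) : 0 < t -> ln t <= t - 1.
Proof.
move=> t0; have := @le_ln1Dx R (t - 1); rewrite (addrC 1) subrK; apply; lra.
Qed.

Lemma expR_le_quadratic (x : R) : x <= 1/2 -> expR x <= 1 + x + 2 * x ^+ 2.
Proof.
move=> hx.
have B0 : 0 <= 1 + x + 2 * x ^+ 2 by nra.
have h : 1 <= (1 + x + 2 * x ^+ 2) * expR (- x).
  apply: le_trans (ler_wpM2l B0 (expR_ge1Dx (- x))); nra.
by rewrite -(ler_pM2r (expR_gt0 (- x))) expRxMexpNx_1.
Qed.

Lemma ln1DexpR_le (t l : R) : 0 < l -> l <= 1 ->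
  ln (1 + expR t) <= expR (l * t) / l.
Proof.
move=> l0 l1; have et := expR_gt0 t.
rewrite ler_pdivlMr //; case: (lerP t 0) => ht.
- have h1 : ln (1 + expR t) <= expR t by apply: le_ln1Dx; lra.
  have h2 : expR t <= expR (l * t) by rewrite ler_expR; nra.
  have h0 : 0 <= ln (1 + expR t) by apply: ln_ge0; lra.
  by apply: le_trans (le_trans h1 h2); rewrite ler_piMr.
- have e1 : 1 <= expR t by have := expR_ge1Dx t; lra.
  have h1 : ln (1 + expR t) <= ln 2 + t.
    rewrite -[t in ln 2 + t]expRK -lnM ?posrE // ler_ln ?posrE; lra.
  have h2 : ln (2 : R) <= 1 by have := @ln_le_sub1 2 (ltr0Sn R 1); lra.
  have := expR_ge1Dx (l * t); nra.
Qed.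

Lemma mgf_le_expR_meanD (I : finType) (p v : I -> R) (eps : R) :
  (forall i, 0 <= p i) -> \sum_i p i = 1 -> 0 < eps ->
  exists l, [/\ 0 < l, l <= 1 &
    \sum_i p i * expR (l * v i) <= expR (l * (\sum_i p i * v i + eps))].
Proof.
move=> p0 p1 e0.
pose B := \sum_i `|v i| + 1.
have vB i : `|v i| <= B - 1.
  by rewrite /B addrK (bigD1 i) //= lerDl; exact: sumr_ge0.
have B1 : 1 <= B by rewrite /B lerDr; exact: sumr_ge0.
(* [l := 1 / D] gives [l B <= 1/2] and [2 l B^2 <= eps], hence by
   [expR_le_quadratic]: [E e^(l v) <= 1 + l E v + 2 l^2 B^2 <= e^(l (E v + eps))]. *)
pose D := 2 * B ^+ 2 / eps + 2 * B.
have hB2 : 0 <= 2 * B ^+ 2 / eps by apply: divr_ge0; nra.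
have D0 : 0 < D by rewrite /D; apply: ltr_wpDl => //; nra.
pose l := D^-1.
have l0 : 0 < l by rewrite invr_gt0.
have lD : l * D = 1 by rewrite mulVf // gt_eqF.
have lB : l * B <= 1/2.
  have : l * (2 * B) <= 1 by rewrite -[X in _ <= X]lD ler_pM2l // /D lerDr.
  lra.
have lB2 : 2 * l * B ^+ 2 <= eps.
  have : l * (2 * B ^+ 2 / eps) <= 1.
    by rewrite -[X in _ <= X]lD ler_pM2l // /D lerDl; nra.
  rewrite mulrA ler_pdivrMr // mul1r; nra.
exists l; split => //; first by nra.
have step i : p i * expR (l * v i) <= p i + l * (p i * v i) + 2 * l ^+ 2 * B ^+ 2 * p i.
  have hv : - B <= v i <= B by rewrite -ler_norml; have := vB i; lra.
  have := @expR_le_quadratic (l * v i) ltac:(nra).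
  have : (l * v i) ^+ 2 <= l ^+ 2 * B ^+ 2.
    by rewrite exprMn ler_pM2l ?exprn_gt0 //; nra.
  have := p0 i; nra.
apply: le_trans (ler_sum _ (fun i _ => step i)) _.
rewrite !big_split /= -!mulr_sumr p1.
apply: le_trans (expR_ge1Dx _); nra.
Qed.

Lemma mgf_le_expR_meanD2 (A B : finType) (p v : A -> B -> R) (eps : R) :
  (forall a b, 0 <= p a b) -> \sum_a \sum_b p a b = 1 -> 0 < eps ->
  exists l, [/\ 0 < l, l <= 1 &
    \sum_a \sum_b p a b * expR (l * v a b)
      <= expR (l * (\sum_a \sum_b p a b * v a b + eps))].
Proof.
move=> p0 p1 e0; rewrite pair_bigA /= in p1.
have [l [l0 l1 h]] := @mgf_le_expR_meanD (A * B)%type (fun u => p u.1 u.2)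
   (fun u => v u.1 u.2) eps (fun u => p0 u.1 u.2) p1 e0.
by exists l; split; rewrite // !pair_bigA.
Qed.

Lemma relative_entropy_ge0 (I : finType) (p q : I -> R) :
  (forall i, 0 <= p i) -> \sum_i p i = 1 -> (forall i, 0 <= q i) ->
  \sum_i q i <= 1 -> (forall i, p i != 0 -> 0 < q i) ->
  0 <= \sum_i (if p i == 0 then 0 else p i * ln (p i / q i)).
Proof.
move=> p0 p1 q0 q1 pq.
have step i : p i - q i <= (if p i == 0 then 0 else p i * ln (p i / q i)).
  case: eqP => [->|/eqP pn0]; first by have := q0 i; lra.
  have pp : 0 < p i by rewrite lt0r pn0 p0.
  have qp := pq i pn0.
  have : p i * ln (q i / p i) <= p i * (q i / p i - 1).
    by rewrite ler_pM2l // ln_le_sub1 // divr_gt0.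
  rewrite -[p i / q i]invf_div lnV ?posrE ?divr_gt0 //.
  rewrite mulrBr mulrCA divff ?mulr1 ?gt_eqF //; lra.
apply: le_trans (ler_sum _ (fun i _ => step i)).
rewrite sumrB p1; lra.
Qed.

Lemma expR_lnexpR_pow_le (l a b g : R) (n : nat) : 0 <= g -> g <= expR (l * a) ->
  expR (l * ln (expR (n%:R * b))) * g ^+ n <= expR (l * (b + a)) ^+ n.
Proof.
move=> g0 ga; rewrite expRK.
apply: le_trans (_ : _ <= expR (l * (n%:R * b)) * expR (l * a) ^+ n) _.
  by rewrite ler_wpM2l ?expR_ge0 // lerXn2r ?nnegrE // (le_trans g0).
by rewrite -!expRM_natl -expRD ler_expR; nra.
Qed.

Lemma truncnS_expR_div_le (rho b : R) (n : nat) : 0 <= rho ->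
  (Num.truncn (expR (n%:R * rho))).+1%:R / expR (n%:R * b) <= 2 * expR (rho - b) ^+ n.
Proof.
move=> rho0.
have kle : (Num.truncn (expR (n%:R * rho)))%:R <= expR (n%:R * rho).
  by rewrite truncn_le expR_ge0.
have e1 : 1 <= expR (n%:R * rho).
  by apply: le_trans (expR_ge1Dx _); rewrite lerDl mulr_ge0.
have -> : 2 * expR (rho - b) ^+ n = 2 * expR (n%:R * rho) / expR (n%:R * b).
  by rewrite -expRM_natl mulrBr expRD expRN mulrA.
rewrite -natr1; apply: (@ler_wpM2r R); rewrite ?invr_ge0 ?expR_ge0 //; lra.
Qed.

Lemma expR_ln_truncnS_le (l a rho h : R) (n : nat) : 0 < l -> 0 <= h ->
  h <= expR (l * a) ->
  expR (- (l * ln (Num.truncn (expR (n%:R * rho))).+1%:R)) / l * h ^+ n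
    <= l^-1 * expR (l * (a - rho)) ^+ n.
Proof.
move=> l0 h0 ha.
have lnM : n%:R * rho <= ln (Num.truncn (expR (n%:R * rho))).+1%:R.
  by rewrite -[X in X <= _]expRK ler_ln ?posrE ?expR_gt0 ?ltr0n // ltW ?truncnS_gt.
apply: le_trans (_ : _ <= expR (- (l * (n%:R * rho))) / l * expR (l * a) ^+ n) _.
  apply: ler_pM.
  - by rewrite divr_ge0 ?expR_ge0 ?ltW.
  - exact: exprn_ge0.
  - by apply: (@ler_wpM2r R); [rewrite invr_ge0 ltW | rewrite ler_expR; nra].
  - by rewrite lerXn2r ?nnegrE ?expR_ge0 // (le_trans h0).
rewrite -!expRM_natl mulrAC -expRD mulrC ler_pM2l ?invr_gt0 // ler_expR; nra.
Qed.

End RealInequalities.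

Section ProductDistribution.
Context {R : realType} {I T : finType}.

Lemma sum_ffun_prodM (p : T -> R) (G : I -> T -> R) :
  \sum_(c : {ffun I -> T}) (\prod_i p (c i)) * \prod_i G i (c i)
   = \prod_i \sum_t p t * G i t.
Proof. by rewrite bigA_distr_bigA; apply: eq_bigr => c _; rewrite -big_split. Qed.

Lemma sum_ffun2_prod (U : finType) (F : I -> T -> U -> R) :
  \sum_(f : {ffun I -> T}) \sum_(g : {ffun I -> U}) \prod_i F i (f i) (g i)
   = \prod_i \sum_t \sum_u F i t u.
Proof.
rewrite [RHS]bigA_distr_bigA; apply: eq_bigr => f _.
by rewrite bigA_distr_bigA.
Qed.

Lemma prod_pick2 (m j : I) (f g : I -> R) : j != m ->
  \prod_i (if i == m then f i else if i == j then g i else 1) = f m * g j.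
Proof.
move=> jm; rewrite (bigD1 m) //= eqxx (bigD1 j) //= (negPf jm) eqxx big1 ?mulr1 //.
by move=> i /andP[/negPf -> /negPf ->].
Qed.

Context {p : T -> R} (p1 : \sum_t p t = 1).

Lemma sum_ffun_prod : \sum_(c : {ffun I -> T}) \prod_i p (c i) = 1.
Proof. by rewrite -(bigA_distr_bigA (fun _ t => p t)) big1. Qed.

Lemma expect_ffun_at (G : T -> R) (m : I) :
  \sum_(c : {ffun I -> T}) (\prod_i p (c i)) * G (c m) = \sum_t p t * G t.
Proof.
transitivity (\sum_(c : {ffun I -> T}) (\prod_i p (c i)) *
    \prod_i (if i == m then G (c i) else 1)).
  by apply: eq_bigr => c _; rewrite -big_mkcond big_pred1_eq.
rewrite (sum_ffun_prodM p (fun i t => if i == m then G t else 1)).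
rewrite (bigD1 m) //= eqxx [X in _ * X]big1 ?mulr1 // => i /negPf ->.
by under eq_bigr do rewrite mulr1.
Qed.

Lemma expect_ffun_at2 (G H : T -> R) (m j : I) : j != m ->
  \sum_(c : {ffun I -> T}) (\prod_i p (c i)) * (G (c m) * H (c j))
   = (\sum_t p t * G t) * (\sum_t p t * H t).
Proof.
move=> jm.
transitivity (\sum_(c : {ffun I -> T}) (\prod_i p (c i)) *
    \prod_i (if i == m then G (c i) else if i == j then H (c i) else 1)).
  by apply: eq_bigr => c _; rewrite prod_pick2.
rewrite (sum_ffun_prodM p (fun i t => if i == m then G t else if i == j then H t else 1)).
rewrite -(prod_pick2 m j (fun _ => \sum_t p t * G t) (fun _ => \sum_t p t * H t) jm).
apply: eq_bigr => i _; case: (i == m) => //; case: (i == j) => //.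
by under eq_bigr do rewrite mulr1.
Qed.

End ProductDistribution.

(* Soft covering: the first summand is handled by a moment bound, the second
   vanishes on average over a random codebook. *)
Lemma mixture_KL_integrand_le (R : realType) (k : nat) (u : 'I_k.+1 -> R) (Q : R) :
  (forall m, 0 <= u m) -> 0 < Q ->
  forall P, P = \sum_m k.+1%:R^-1 * u m ->
  (if P == 0 then 0 else P * ln (P / Q))
  <= k.+1%:R^-1 * \sum_m (u m * ln (1 + u m / (k.+1%:R * Q)) +
                           u m * (P / (Q + u m / k.+1%:R) - 1)).
Proof.
move=> u0 hQ P hP.
have Mp : (0 : R) < k.+1%:R by rewrite ltr0n.
have t0 m : 0 <= k.+1%:R^-1 * u m by rewrite mulr_ge0 ?u0 // invr_ge0 ltW.
case: eqP => [P0 | /eqP Pn0].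
  have uz m : u m = 0.
    have /eqP := @psumr_eq0P _ _ _ _ (fun i _ => t0 i) (etrans (esym hP) P0) m isT.
    by rewrite mulf_eq0 invr_eq0 pnatr_eq0 /= => /eqP.
  by rewrite big1 ?mulr0 // => m _; rewrite uz !mul0r add0r.
have Pp : 0 < P by rewrite lt0r Pn0 hP sumr_ge0.
rewrite {1}hP mulr_suml mulr_sumr; apply: ler_sum => m _.
rewrite -mulrA; apply: ler_wpM2l; first by rewrite invr_ge0 ltW.
have [->|um0] := eqVneq (u m) 0; first by rewrite !mul0r add0r.
have up : 0 < u m by rewrite lt0r um0 u0.
have Dp : 0 < Q + u m / k.+1%:R by rewrite ltr_wpDr ?divr_ge0 ?ltW.
rewrite -mulrDr; apply: ler_wpM2l; first exact: ltW.
have -> : P / Q = (1 + u m / (k.+1%:R * Q)) * (P / (Q + u m / k.+1%:R)).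
  by field; apply/and3P; split; rewrite gt_eqF //; have := ler0n R k; nra.
have h1 : 0 < 1 + u m / (k.+1%:R * Q) by rewrite ltr_wpDr ?divr_ge0 ?mulr_ge0 ?ltW.
have h2 : 0 < P / (Q + u m / k.+1%:R) by rewrite divr_gt0.
by rewrite lnM ?posrE // lerD2l ln_le_sub1.
Qed.

Section Channel.
Context {R : realType} {S X Y Z : finType} {QS : S -> R}
  {W : X -> S -> Y -> Z -> R} {x0 : X} {PX : X -> R}.
Hypotheses (hQS : is_pmf QS) (hW : is_channel W) (hPX : is_pmf PX)
  (hPZ : forall z, PZ QS W PX z = Q0 QS W x0 z) (hQ0 : forall z, 0 < Q0 QS W x0 z).

(* The codes built below never look at the state, so every channel use is
   governed by the state-averaged marginal channels [WY] and [WZ]. *)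
Definition WY x y := \sum_s \sum_z QS s * W x s y z.
Definition WZ x z := \sum_s \sum_y QS s * W x s y z.
Definition PY y := \sum_x PX x * WY x y.

Definition infoY x y := if PX x * WY x y == 0 then 0 else ln (WY x y / PY y).
Definition infoZ x z :=
  if PX x * WZ x z == 0 then 0 else ln (WZ x z / Q0 QS W x0 z).

Let QS_ge0 s : 0 <= QS s. Proof. by case: hQS. Qed.
Let PX_ge0 x : 0 <= PX x. Proof. by case: hPX. Qed.
Let W_ge0 x s y z : 0 <= W x s y z. Proof. by case: (hW x s) => h _; apply: h. Qed.

Lemma WY_ge0 x y : 0 <= WY x y.
Proof. by apply: sumr_ge0 => s _; apply: sumr_ge0 => z _; rewrite mulr_ge0. Qed.

Lemma WZ_ge0 x z : 0 <= WZ x z.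
Proof. by apply: sumr_ge0 => s _; apply: sumr_ge0 => y _; rewrite mulr_ge0. Qed.

Lemma PY_ge0 y : 0 <= PY y.
Proof. by apply: sumr_ge0 => x _; rewrite mulr_ge0 ?WY_ge0. Qed.

Lemma sum_WY x : \sum_y WY x y = 1.
Proof.
rewrite /WY exchange_big /=; case: hQS => _ <-; apply: eq_bigr => s _.
under eq_bigr do rewrite -mulr_sumr.
by rewrite -mulr_sumr; case: (hW x s) => _ ->; rewrite mulr1.
Qed.

Lemma sum_WZ x : \sum_z WZ x z = 1.
Proof.
rewrite /WZ exchange_big /=; case: hQS => _ <-; apply: eq_bigr => s _.
under eq_bigr do rewrite -mulr_sumr.
by rewrite -mulr_sumr exchange_big /=; case: (hW x s) => _ ->; rewrite mulr1.
Qed.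

Lemma PXY_E x y : PXY QS W PX x y = PX x * WY x y.
Proof.
rewrite /PXY /WY mulr_sumr; apply: eq_bigr => s _; rewrite mulr_sumr.
by apply: eq_bigr => z _; rewrite mulrCA mulrA.
Qed.

Lemma PXZ_E x z : PXZ QS W PX x z = PX x * WZ x z.
Proof.
rewrite /PXZ /WZ mulr_sumr; apply: eq_bigr => s _; rewrite mulr_sumr.
by apply: eq_bigr => y _; rewrite mulrCA mulrA.
Qed.

Lemma Q0_E z : Q0 QS W x0 z = \sum_x PX x * WZ x z.
Proof. by rewrite -hPZ; apply: eq_bigr => x _; rewrite PXZ_E. Qed.

Lemma sum_PX_WY : \sum_x \sum_y PX x * WY x y = 1.
Proof. by under eq_bigr do rewrite -mulr_sumr sum_WY mulr1; case: hPX. Qed.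

Lemma sum_PX_WZ : \sum_x \sum_z PX x * WZ x z = 1.
Proof. by under eq_bigr do rewrite -mulr_sumr sum_WZ mulr1; case: hPX. Qed.

Lemma sum_Q0 : \sum_z Q0 QS W x0 z = 1.
Proof. by under eq_bigr do rewrite Q0_E; rewrite exchange_big sum_PX_WZ. Qed.

Lemma PY_gt0 {x y} : PX x * WY x y != 0 -> 0 < PY y.
Proof.
move=> h; rewrite /PY (bigD1 x) //= ltr_wpDr ?lt0r ?h ?mulr_ge0 ?WY_ge0 //.
by apply: sumr_ge0 => i _; rewrite mulr_ge0 ?WY_ge0.
Qed.

Lemma expR_infoY x y : PX x * WY x y != 0 -> expR (infoY x y) = WY x y / PY y.
Proof.
move=> h; have [_ w0] := mulr_neq0_gt0 (PX_ge0 x) (WY_ge0 x y) h.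
by rewrite /infoY (negPf h) lnK // posrE divr_gt0 // (PY_gt0 h).
Qed.

Lemma expR_infoZ x z : PX x * WZ x z != 0 -> expR (infoZ x z) = WZ x z / Q0 QS W x0 z.
Proof.
move=> h; have [_ w0] := mulr_neq0_gt0 (PX_ge0 x) (WZ_ge0 x z) h.
by rewrite /infoZ (negPf h) lnK // posrE divr_gt0.
Qed.

Lemma ln2_mutinfoY :
  ln 2 * mutinfo (PXY QS W PX) = \sum_x \sum_y PX x * WY x y * infoY x y.
Proof.
have l2 : ln (2 : R) != 0 by rewrite gt_eqF // ln_gt0 // ltr1n.
rewrite /mutinfo mulr_sumr; apply: eq_bigr => x _; rewrite mulr_sumr.
apply: eq_bigr => y _; rewrite /infoY !PXY_E.
case: eqP => [_|/eqP h]; first by rewrite !mulr0.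
have [px0 _] := mulr_neq0_gt0 (PX_ge0 x) (WY_ge0 x y) h.
have -> : \sum_b PXY QS W PX x b = PX x.
  by under eq_bigr do rewrite PXY_E; rewrite -mulr_sumr sum_WY mulr1.
have -> : \sum_a PXY QS W PX a y = PY y by apply: eq_bigr => a _; rewrite PXY_E.
rewrite -mulf_div divff ?gt_eqF // mul1r /log2.
by rewrite mulrCA [ln 2 * _]mulrCA mulfV // mulr1.
Qed.

Lemma ln2_mutinfoZ :
  ln 2 * mutinfo (PXZ QS W PX) = \sum_x \sum_z PX x * WZ x z * infoZ x z.
Proof.
have l2 : ln (2 : R) != 0 by rewrite gt_eqF // ln_gt0 // ltr1n.
rewrite /mutinfo mulr_sumr; apply: eq_bigr => x _; rewrite mulr_sumr.
apply: eq_bigr => z _; rewrite /infoZ !PXZ_E.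
case: eqP => [_|/eqP h]; first by rewrite !mulr0.
have [px0 _] := mulr_neq0_gt0 (PX_ge0 x) (WZ_ge0 x z) h.
have -> : \sum_a PXZ QS W PX a z = Q0 QS W x0 z by rewrite -hPZ.
have -> : \sum_b PXZ QS W PX x b = PX x.
  by under eq_bigr do rewrite PXZ_E; rewrite -mulr_sumr sum_WZ mulr1.
rewrite -mulf_div divff ?gt_eqF // mul1r /log2.
by rewrite mulrCA [ln 2 * _]mulrCA mulfV // mulr1.
Qed.

Lemma mutinfoZ_ge0 : 0 <= mutinfo (PXZ QS W PX).
Proof.
have l2 : 0 < ln (2 : R) by rewrite ln_gt0 // ltr1n.
rewrite -(pmulr_rge0 _ l2) ln2_mutinfoZ pair_bigA /=.
pose p (u : X * Z) := PX u.1 * WZ u.1 u.2.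
pose q (u : X * Z) := PX u.1 * Q0 QS W x0 u.2.
have -> : \sum_u PX u.1 * WZ u.1 u.2 * infoZ u.1 u.2 =
          \sum_u (if p u == 0 then 0 else p u * ln (p u / q u)).
  apply: eq_bigr => -[x z] _; rewrite /p /q /infoZ /=.
  case: eqP => [_|/eqP h]; first by rewrite mulr0.
  have [px0 _] := mulr_neq0_gt0 (PX_ge0 x) (WZ_ge0 x z) h.
  by rewrite -mulf_div divff ?gt_eqF // mul1r.
apply: relative_entropy_ge0.
- by move=> u; rewrite mulr_ge0 ?WZ_ge0.
- by rewrite /p -(pair_bigA _ (fun x z => PX x * WZ x z)) sum_PX_WZ.
- by move=> u; apply: mulr_ge0 (PX_ge0 _) (ltW (hQ0 _)).
- rewrite /q -(pair_bigA _ (fun x z => PX x * Q0 QS W x0 z)).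
  by under eq_bigr do rewrite -mulr_sumr sum_Q0 mulr1; case: hPX => _ ->.
- move=> -[x z] h; have [px0 _] := mulr_neq0_gt0 (PX_ge0 x) (WZ_ge0 x z) h.
  exact: mulr_gt0.
Qed.

Section RandomCoding.
Variables (n k : nat).
Local Notation M := k.+1.
Local Notation XS := {ffun 'I_n -> X}.
Local Notation YS := {ffun 'I_n -> Y}.
Local Notation ZS := {ffun 'I_n -> Z}.
Local Notation codebook := {ffun 'I_M -> XS}.

Definition PXn (xs : XS) := \prod_i PX (xs i).
Definition WYn (xs : XS) (ys : YS) := \prod_i WY (xs i) (ys i).
Definition WZn (xs : XS) (zs : ZS) := \prod_i WZ (xs i) (zs i).
Definition PYn (ys : YS) := \prod_i PY (ys i).

Lemma PXn_ge0 xs : 0 <= PXn xs. Proof. exact: prodr_ge0. Qed.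
Lemma WYn_ge0 xs ys : 0 <= WYn xs ys.
Proof. by apply: prodr_ge0 => i _; apply: WY_ge0. Qed.
Lemma WZn_ge0 xs zs : 0 <= WZn xs zs.
Proof. by apply: prodr_ge0 => i _; apply: WZ_ge0. Qed.
Lemma PYn_ge0 ys : 0 <= PYn ys. Proof. by apply: prodr_ge0 => i _; apply: PY_ge0. Qed.
Lemma Q0n_gt0 (zs : ZS) : 0 < Q0n QS W x0 zs. Proof. exact: prodr_gt0. Qed.

Lemma sum_PXn : \sum_xs PXn xs = 1.
Proof. by apply: sum_ffun_prod; case: hPX. Qed.

Lemma sum_PXn_WYn ys : \sum_xs PXn xs * WYn xs ys = PYn ys.
Proof. exact: (sum_ffun_prodM PX (fun i x => WY x (ys i))). Qed.

Lemma sum_PXn_WZn zs : \sum_xs PXn xs * WZn xs zs = Q0n QS W x0 zs.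
Proof.
rewrite (sum_ffun_prodM PX (fun i x => WZ x (zs i))).
by apply: eq_bigr => i _; rewrite Q0_E.
Qed.

Lemma sum_WYn xs : \sum_ys WYn xs ys = 1.
Proof.
rewrite -(bigA_distr_bigA (fun i y => WY (xs i) y)).
by apply: big1 => i _; apply: sum_WY.
Qed.

Lemma sum_WZn xs : \sum_zs WZn xs zs = 1.
Proof.
rewrite -(bigA_distr_bigA (fun i z => WZ (xs i) z)).
by apply: big1 => i _; apply: sum_WZ.
Qed.

Definition code_of (c : codebook) (d : YS -> 'I_M) : sc_code S X Y n M :=
  @SCCode S X Y n M (fun i m _ => c m i) d (fun _ _ _ _ _ => erefl).

Lemma err_prob_code_of c d : err_prob QS W (code_of c d) =
  M%:R^-1 * \sum_m \sum_ys (if d ys != m then WYn (c m) ys else 0).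
Proof.
rewrite /err_prob mulr_sumr; apply: eq_bigr => m _.
rewrite exchange_big /= mulr_sumr; apply: eq_bigr => ys _ /=.
case: (d ys != m); last by rewrite mulr0 big1 // => s _; rewrite big1.
rewrite /code_joint /=.
under eq_bigr do rewrite -mulr_sumr.
rewrite -mulr_sumr; congr (_ * _).
by rewrite (@sum_ffun2_prod _ _ _ _ (fun i s z => QS s * W (c m i) s (ys i) z)).
Qed.

Lemma PZn_code_of c d zs :
  PZn QS W (code_of c d) zs = \sum_m M%:R^-1 * WZn (c m) zs.
Proof.
apply: eq_bigr => m _; rewrite /code_joint /=.
under eq_bigr do rewrite -mulr_sumr.
rewrite -mulr_sumr; congr (_ * _).
by rewrite (@sum_ffun2_prod _ _ _ _ (fun i s y => QS s * W (c m i) s y (zs i))).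
Qed.

Lemma err_prob_code_of_ge0 c d : 0 <= err_prob QS W (code_of c d).
Proof.
rewrite err_prob_code_of mulr_ge0 ?invr_ge0 //.
by apply: sumr_ge0 => m _; apply: sumr_ge0 => ys _; case: ifP => _ //; apply: WYn_ge0.
Qed.

Lemma KL_code_of_ge0 c d : 0 <= KL (PZn QS W (code_of c d)) (@Q0n R S X Y Z QS W x0 n).
Proof.
apply: relative_entropy_ge0 => [zs||zs||zs _].
- rewrite PZn_code_of; apply: sumr_ge0 => m _.
  by rewrite mulr_ge0 ?invr_ge0 ?WZn_ge0.
- under eq_bigr do rewrite PZn_code_of.
  rewrite exchange_big /=.
  under eq_bigr do rewrite -mulr_sumr sum_WZn mulr1.
  by rewrite sumr_const card_ord -[_ *+ _]mulr_natr mulVf // pnatr_eq0.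
- exact/ltW/Q0n_gt0.
- rewrite -(bigA_distr_bigA (fun _ z => Q0 QS W x0 z)).
  by rewrite big1 // => i _; apply: sum_Q0.
- exact: Q0n_gt0.
Qed.

Definition typical (K : R) (xs : XS) (ys : YS) : bool := K * PYn ys < WYn xs ys.
Definition thr_dec (K : R) (c : codebook) (ys : YS) : 'I_M :=
  odflt ord0 [pick m | typical K (c m) ys].

Definition codebook_prob (c : codebook) := \prod_m PXn (c m).

Lemma codebook_prob_ge0 c : 0 <= codebook_prob c.
Proof. by apply: prodr_ge0 => m _; apply: PXn_ge0. Qed.

Lemma sum_codebook_prob : \sum_c codebook_prob c = 1.
Proof. exact: (sum_ffun_prod sum_PXn). Qed.

Lemma thr_dec_neq_le K c ys m : ((thr_dec K c ys != m)%:R : R) <=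
  (~~ typical K (c m) ys)%:R + \sum_(j | j != m) ((typical K (c j) ys)%:R : R).
Proof.
have s0 : 0 <= \sum_(j | j != m) ((typical K (c j) ys)%:R : R) by apply: sumr_ge0.
rewrite /thr_dec; case: pickP => [j hj|hnone] /=; last first.
  by rewrite hnone /=; case: (_ != _) => /=; lra.
have [_|jm] := eqVneq j m; first by rewrite addr_ge0.
rewrite (bigD1 j) //= hj.
have : 0 <= \sum_(i | (i != m) && (i != j)) ((typical K (c i) ys)%:R : R).
  exact: sumr_ge0.
have : (0 : R) <= (~~ typical K (c m) ys)%:R by [].
rewrite [true%:R]/= mulr1n; lra.
Qed.

Lemma err_prob_thr_dec_le K c :
  err_prob QS W (code_of c (thr_dec K c)) <= M%:R^-1 * \sum_m \sum_ys
   (WYn (c m) ys * (~~ typical K (c m) ys)%:R +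
    \sum_(j | j != m) WYn (c m) ys * (typical K (c j) ys)%:R).
Proof.
rewrite err_prob_code_of ler_wpM2l ?invr_ge0 //.
apply: ler_sum => m _; apply: ler_sum => ys _.
rewrite -mulr_sumr -mulrDr.
have := thr_dec_neq_le K c ys m; have := WYn_ge0 (c m) ys.
case: (thr_dec K c ys != m) => /= w0 h; first exact: ler_peMr.
exact: mulr_ge0 (le_trans _ h).
Qed.

(* Averaged over the codebook, a wrong codeword [c j] is independent of the
   output produced by [c m], whose law is then [PYn]. *)
Lemma expect_err_term_le K m ys :
  \sum_c codebook_prob c * (WYn (c m) ys * (~~ typical K (c m) ys)%:R +
     \sum_(j | j != m) WYn (c m) ys * (typical K (c j) ys)%:R)
  <= \sum_xs PXn xs * (WYn xs ys * (~~ typical K xs ys)%:R) +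
     M%:R * (PYn ys * \sum_xs PXn xs * (typical K xs ys)%:R).
Proof.
under eq_bigr do rewrite mulrDr.
rewrite big_split /=.
rewrite (expect_ffun_at sum_PXn (fun t => WYn t ys * (~~ typical K t ys)%:R) m) lerD2l.
under eq_bigr do rewrite mulr_sumr.
rewrite exchange_big /=.
rewrite (eq_bigr (fun _ => PYn ys * \sum_xs PXn xs * (typical K xs ys)%:R)); last first.
  move=> j jm.
  rewrite (expect_ffun_at2 sum_PXn (fun t => WYn t ys)
            (fun t => (typical K t ys)%:R) m j jm).
  by rewrite sum_PXn_WYn.
have b0 : 0 <= PYn ys * \sum_xs PXn xs * (typical K xs ys)%:R.
  by rewrite mulr_ge0 ?PYn_ge0 //; apply: sumr_ge0 => xs _; rewrite mulr_ge0 ?PXn_ge0.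
have <- : \sum_(j < M) PYn ys * \sum_xs PXn xs * (typical K xs ys)%:R
    = M%:R * (PYn ys * \sum_xs PXn xs * (typical K xs ys)%:R).
  by rewrite sumr_const card_ord mulr_natl.
by rewrite [X in _ <= X](bigD1 m) //= lerDr.
Qed.

Lemma sum_PYn_typical_le K : 0 < K ->
  \sum_ys PYn ys * \sum_xs PXn xs * (typical K xs ys)%:R <= K^-1.
Proof.
move=> K0.
have -> : K^-1 = \sum_ys \sum_xs PXn xs * WYn xs ys / K.
  rewrite exchange_big /=.
  under eq_bigr do rewrite -mulr_suml -mulr_sumr sum_WYn mulr1.
  by rewrite -mulr_suml sum_PXn mul1r.
apply: ler_sum => ys _; rewrite mulr_sumr; apply: ler_sum => xs _.
have := PXn_ge0 xs; have := WYn_ge0 xs ys.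
rewrite /typical; case: ltrP => h /= w0 p0; last first.
  by rewrite !mulr0; apply: divr_ge0; [exact: mulr_ge0 | exact: ltW].
by rewrite mulr1 mulrC -mulrA ler_wpM2l // ler_pdivlMr // mulrC ltW.
Qed.

Lemma expect_err_prob_le K : 0 < K ->
  \sum_c codebook_prob c * err_prob QS W (code_of c (thr_dec K c)) <=
  \sum_ys \sum_xs PXn xs * (WYn xs ys * (~~ typical K xs ys)%:R) + M%:R / K.
Proof.
move=> K0.
apply: le_trans (ler_sum _ (fun c _ => ler_wpM2l (codebook_prob_ge0 c)
                                        (err_prob_thr_dec_le K c))) _.
under eq_bigr do rewrite mulrCA.
rewrite -mulr_sumr.
under eq_bigr do rewrite mulr_sumr.
rewrite exchange_big /=.
under eq_bigr => m _ do under eq_bigr => c _ do rewrite mulr_sumr.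
under eq_bigr => m _ do rewrite exchange_big /=.
have Mp : (0 : R) < M%:R by rewrite ltr0n.
rewrite ler_pdivrMl //.
apply: le_trans (ler_sum _ (fun m _ => ler_sum _ (fun ys _ =>
                   expect_err_term_le K m ys))) _.
rewrite sumr_const card_ord -(mulr_natl (\sum_(i : YS) _) M) ler_pM2l //.
by rewrite big_split /= -mulr_sumr lerD2l ler_pM2l // sum_PYn_typical_le.
Qed.

(* Chernoff: an atypical pair has [sum_i infoY <= ln K], so its indicator is at
   most [exp (l (ln K - sum_i infoY))]. *)
Lemma atypical_term_le K l (xs : XS) (ys : YS) : 0 < K -> 0 < l ->
  PXn xs * (WYn xs ys * (~~ typical K xs ys)%:R) <=
  expR (l * ln K) *
    \prod_i (PX (xs i) * WY (xs i) (ys i) * expR (l * - infoY (xs i) (ys i))).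
Proof.
move=> K0 l0.
pose P := \prod_i (PX (xs i) * WY (xs i) (ys i)).
have eP : PXn xs * WYn xs ys = P by rewrite -big_split.
have P0 : 0 <= P by rewrite -eP mulr_ge0 ?PXn_ge0 ?WYn_ge0.
rewrite big_split /= -expR_sum -mulr_sumr mulrA eP -/P.
have [->|Pn0] := eqVneq P 0; first by rewrite !mul0r mulr0.
have hn i : PX (xs i) * WY (xs i) (ys i) != 0 by move/prodf_neq0: Pn0; apply.
case hT: (typical K xs ys) => /=.
  by rewrite mulr0 !mulr_ge0 ?expR_ge0.
rewrite mulr1 mulrCA -expRD -mulrDr ler_peMr ?expR_ge0 //.
have WYn_gt0 : 0 < WYn xs ys.
  by apply: prodr_gt0 => i _; have [] := mulr_neq0_gt0 (PX_ge0 _) (WY_ge0 _ _) (hn i).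
have key : 0 <= ln K + \sum_i - infoY (xs i) (ys i).
  rewrite leNgt -expR_lt1 -leNgt expRD expR_sum lnK ?posrE //.
  rewrite (eq_bigr (fun i => PY (ys i) / WY (xs i) (ys i))); last first.
    by move=> i _; rewrite expRN expR_infoY ?invf_div.
  rewrite prodf_div -/(PYn ys) -/(WYn xs ys) mulrA ler_pdivlMr // mul1r.
  by move: hT; rewrite /typical => /negbT; rewrite -leNgt.
apply: le_trans (expR_ge1Dx _); rewrite lerDl; exact: mulr_ge0 (ltW l0) key.
Qed.

Lemma sum_atypical_le K l : 0 < K -> 0 < l ->
  \sum_(ys : YS) \sum_(xs : XS) PXn xs * (WYn xs ys * (~~ typical K xs ys)%:R) <=
  expR (l * ln K) *
    (\sum_x \sum_y PX x * WY x y * expR (l * - infoY x y)) ^+ n.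
Proof.
move=> K0 l0.
apply: le_trans (ler_sum _ (fun ys _ => ler_sum _ (fun xs _ =>
                   atypical_term_le K l xs ys K0 l0))) _.
under eq_bigr do rewrite -mulr_sumr.
rewrite -mulr_sumr exchange_big /=.
rewrite (@sum_ffun2_prod _ _ _ _ (fun _ x y => PX x * WY x y * expR (l * - infoY x y))).
by rewrite prodr_const card_ord.
Qed.

Definition soft_term (xs : XS) (zs : ZS) :=
  WZn xs zs * ln (1 + WZn xs zs / (M%:R * Q0n QS W x0 zs)).
Definition cross_term (c : codebook) m (zs : ZS) :=
  WZn (c m) zs * ((\sum_j M%:R^-1 * WZn (c j) zs) /
     (Q0n QS W x0 zs + WZn (c m) zs / M%:R) - 1).

Lemma KL_code_of_le c d : KL (PZn QS W (code_of c d)) (@Q0n R S X Y Z QS W x0 n) <=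
  M%:R^-1 * \sum_m \sum_zs (soft_term (c m) zs + cross_term c m zs).
Proof.
apply: le_trans (ler_sum _ (fun zs _ => @mixture_KL_integrand_le _ _ _ _
   (fun m => WZn_ge0 (c m) zs) (Q0n_gt0 zs) _ (PZn_code_of c d zs))) _.
under eq_bigr do rewrite PZn_code_of.
by rewrite -mulr_sumr exchange_big.
Qed.

Lemma cross_term_E c m zs :
  let G t := WZn t zs / (Q0n QS W x0 zs + WZn t zs / M%:R) in
  cross_term c m zs = M%:R^-1 * (G (c m) * WZn (c m) zs) - WZn (c m) zs +
    \sum_(j | j != m) M%:R^-1 * (G (c m) * WZn (c j) zs).
Proof.
move=> G; rewrite /cross_term (bigD1 m) //=.
set Sm := \sum_(j | j != m) M%:R^-1 * WZn (c j) zs.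
have -> : \sum_(j | j != m) M%:R^-1 * (G (c m) * WZn (c j) zs) = G (c m) * Sm.
  by rewrite mulr_sumr; apply: eq_bigr => j _; rewrite mulrCA.
rewrite /G; field; apply/andP; split; rewrite gt_eqF //.
by have := ler0n R k; have := WZn_ge0 (c m) zs; have := Q0n_gt0 zs; nra.
Qed.

(* Averaging the cross term over the codebook, the other codewords contribute
   [Q0n] through the marginal identity [sum_PXn_WZn], which cancels the rest. *)
Lemma expect_cross_term_le0 m zs : \sum_c codebook_prob c * cross_term c m zs <= 0.
Proof.
set Q := Q0n QS W x0 zs.
have Qp : 0 < Q := Q0n_gt0 zs.
have Mp : (0 : R) < M%:R by rewrite ltr0n.
pose G t := WZn t zs / (Q + WZn t zs / M%:R).
have Dp t : 0 < Q + WZn t zs / M%:R by rewrite ltr_wpDr ?divr_ge0 ?WZn_ge0.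
have G0 t : 0 <= G t by rewrite divr_ge0 ?WZn_ge0 ?(ltW (Dp t)).
under eq_bigr do rewrite cross_term_E /= mulrDr mulr_sumr.
rewrite big_split /= (expect_ffun_at sum_PXn
  (fun t => M%:R^-1 * (G t * WZn t zs) - WZn t zs) m).
rewrite [X in _ + X]exchange_big /=.
rewrite [X in _ + X](eq_bigr (fun _ => M%:R^-1 * ((\sum_t PXn t * G t) * Q))); last first.
  move=> j jm; under eq_bigr do rewrite mulrCA.
  rewrite -mulr_sumr (expect_ffun_at2 sum_PXn G (fun t => WZn t zs) m j jm).
  by rewrite sum_PXn_WZn.
have c0 : 0 <= M%:R^-1 * ((\sum_t PXn t * G t) * Q).
  rewrite mulr_ge0 ?invr_ge0 // mulr_ge0 ?(ltW Qp) //.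
  by apply: sumr_ge0 => t _; rewrite mulr_ge0 ?PXn_ge0 ?G0.
apply: le_trans (_ : _ <= \sum_t PXn t * (M%:R^-1 * (G t * WZn t zs) - WZn t zs) +
                         \sum_(j < M) M%:R^-1 * ((\sum_t PXn t * G t) * Q)) _.
  by rewrite lerD2l [X in _ <= X](bigD1 m) //= lerDr.
rewrite sumr_const card_ord -(mulr_natl (M%:R^-1 * _) M) mulrA mulfV ?gt_eqF // mul1r.
rewrite mulr_suml -big_split /= big1 // => t _.
rewrite /G; field; apply/andP; split; rewrite gt_eqF //.
by have := ler0n R k; have := WZn_ge0 t zs; nra.
Qed.

(* The bound [ln (1 + e^t) <= e^(l t) / l] turns the soft-covering term into a
   moment generating function of the information density [infoZ]. *)
Lemma soft_term_le l (xs : XS) (zs : ZS) : 0 < l -> l <= 1 ->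
  PXn xs * soft_term xs zs <= expR (- (l * ln M%:R)) / l *
    \prod_i (PX (xs i) * WZ (xs i) (zs i) * expR (l * infoZ (xs i) (zs i))).
Proof.
move=> l0 l1.
pose P := \prod_i (PX (xs i) * WZ (xs i) (zs i)).
have eP : PXn xs * WZn xs zs = P by rewrite -big_split.
have P0 : 0 <= P by rewrite -eP mulr_ge0 ?PXn_ge0 ?WZn_ge0.
rewrite /soft_term big_split /= -expR_sum -mulr_sumr mulrA eP -/P.
have [->|Pn0] := eqVneq P 0; first by rewrite !mul0r mulr0.
have hn i : PX (xs i) * WZ (xs i) (zs i) != 0 by move/prodf_neq0: Pn0; apply.
have Mp : (0 : R) < M%:R by rewrite ltr0n.
have -> : WZn xs zs / (M%:R * Q0n QS W x0 zs) =
          expR (\sum_i infoZ (xs i) (zs i) - ln M%:R).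
  rewrite expRD expR_sum expRN lnK ?posrE //.
  rewrite (eq_bigr (fun i => WZ (xs i) (zs i) / Q0 QS W x0 (zs i))); last first.
    by move=> i _; rewrite expR_infoZ.
  by rewrite prodf_div /WZn /Q0n invfM; ring.
apply: (le_trans (ler_wpM2l P0 (ln1DexpR_le _ _ l0 l1))).
rewrite mulrDr expRD mulrN; lra.
Qed.

Lemma sum_soft_term_le l : 0 < l -> l <= 1 ->
  \sum_(zs : ZS) \sum_(xs : XS) PXn xs * soft_term xs zs <=
  expR (- (l * ln M%:R)) / l *
    (\sum_x \sum_z PX x * WZ x z * expR (l * infoZ x z)) ^+ n.
Proof.
move=> l0 l1.
apply: le_trans (ler_sum _ (fun zs _ => ler_sum _ (fun xs _ =>
                   soft_term_le l xs zs l0 l1))) _.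
under eq_bigr do rewrite -mulr_sumr.
rewrite -mulr_sumr exchange_big /=.
rewrite (@sum_ffun2_prod _ _ _ _ (fun _ x z => PX x * WZ x z * expR (l * infoZ x z))).
by rewrite prodr_const card_ord.
Qed.

Lemma expect_KL_le l (d : codebook -> YS -> 'I_M) : 0 < l -> l <= 1 ->
  \sum_c codebook_prob c * KL (PZn QS W (code_of c (d c))) (@Q0n R S X Y Z QS W x0 n)
   <= expR (- (l * ln M%:R)) / l *
      (\sum_x \sum_z PX x * WZ x z * expR (l * infoZ x z)) ^+ n.
Proof.
move=> l0 l1.
apply: le_trans (ler_sum _ (fun c _ => ler_wpM2l (codebook_prob_ge0 c)
                                        (KL_code_of_le c (d c)))) _.
under eq_bigr do rewrite mulrCA.
rewrite -mulr_sumr.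
under eq_bigr do rewrite mulr_sumr.
rewrite exchange_big /=.
under eq_bigr => m _ do under eq_bigr => c _ do rewrite mulr_sumr.
under eq_bigr => m _ do rewrite exchange_big /=.
apply: le_trans (_ : _ <= M%:R^-1 * \sum_(m < M) \sum_(zs : ZS)
                           \sum_(xs : XS) PXn xs * soft_term xs zs) _.
  rewrite ler_wpM2l ?invr_ge0 //.
  apply: ler_sum => m _; apply: ler_sum => zs _.
  under eq_bigr do rewrite mulrDr.
  rewrite big_split /= (expect_ffun_at sum_PXn (fun t => soft_term t zs) m).
  by rewrite -[X in _ <= X]addr0 lerD2l expect_cross_term_le0.
rewrite sumr_const card_ord -(mulr_natl (\sum_(zs : ZS) _) M) mulrA.
by rewrite mulVf ?pnatr_eq0 // mul1r sum_soft_term_le.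
Qed.

(* Some codebook does at least as well as the average over the random ensemble. *)
Lemma exists_good_codebook K l1 l2 : 0 < K -> 0 < l1 -> 0 < l2 -> l2 <= 1 ->
  exists c : codebook,
    err_prob QS W (code_of c (thr_dec K c)) +
    KL (PZn QS W (code_of c (thr_dec K c))) (@Q0n R S X Y Z QS W x0 n) <=
    expR (l1 * ln K) * (\sum_x \sum_y PX x * WY x y * expR (l1 * - infoY x y)) ^+ n
    + M%:R / K
    + expR (- (l2 * ln M%:R)) / l2 *
      (\sum_x \sum_z PX x * WZ x z * expR (l2 * infoZ x z)) ^+ n.
Proof.
move=> K0 l10 l20 l21.
pose F c := err_prob QS W (code_of c (thr_dec K c)) +
    KL (PZn QS W (code_of c (thr_dec K c))) (@Q0n R S X Y Z QS W x0 n).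
have [cm _ hmin] := @arg_minP _ _ _ [ffun _ => [ffun _ => x0]] predT F isT.
exists cm; apply: le_trans (_ : _ <= \sum_c codebook_prob c * F c) _.
  rewrite -/(F cm) -[F cm]mul1r -sum_codebook_prob mulr_suml; apply: ler_sum => c _.
  by rewrite ler_wpM2l ?codebook_prob_ge0 ?hmin.
under eq_bigr do rewrite mulrDr.
rewrite big_split /=; apply: lerD; last exact: expect_KL_le.
apply: le_trans (expect_err_prob_le K K0) _; rewrite lerD2r.
exact: sum_atypical_le.
Qed.

End RandomCoding.

Lemma achievable_of_geometric (r C q : R) (Mn : nat -> nat) : `|q| < 1 ->
  (forall n, 2 `^ (n%:R * r) <= (Mn n)%:R) ->
  (forall n, exists c : sc_code S X Y n (Mn n),
     [/\ 0 <= err_prob QS W c, 0 <= KL (PZn QS W c) (@Q0n R S X Y Z QS W x0 n) &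
         err_prob QS W c + KL (PZn QS W c) (@Q0n R S X Y Z QS W x0 n) <= C * q ^+ n]) ->
  achievable QS W x0 r.
Proof.
move=> hq hM hc.
have hcn n := svalP (cid (hc n)).
exists Mn, (fun n => sval (cid (hc n))); split => //.
have gq := cvg_geometric C hq.
split; apply: (squeeze_cvgr _ (cvg_cst 0) gq); apply: nearW => n /=;
  have [e0 k0 b] := hcn n; rewrite /geometric; apply/andP; split => //; lra.
Qed.

Lemma exists_code_exp_bound (rho b a1 a2 l1 l2 : R) (n : nat) :
  0 <= rho -> 0 < l1 -> 0 < l2 -> l2 <= 1 ->
  \sum_x \sum_y PX x * WY x y * expR (l1 * - infoY x y) <= expR (l1 * a1) ->
  \sum_x \sum_z PX x * WZ x z * expR (l2 * infoZ x z) <= expR (l2 * a2) ->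
  exists c : sc_code S X Y n (Num.truncn (expR (n%:R * rho))).+1,
    [/\ 0 <= err_prob QS W c, 0 <= KL (PZn QS W c) (@Q0n R S X Y Z QS W x0 n) &
        err_prob QS W c + KL (PZn QS W c) (@Q0n R S X Y Z QS W x0 n) <=
        expR (l1 * (b + a1)) ^+ n + 2 * expR (rho - b) ^+ n +
        l2^-1 * expR (l2 * (a2 - rho)) ^+ n].
Proof.
move=> rho0 l1p l2p l2le hY hZ; set k := Num.truncn _.
have [c hc] := exists_good_codebook n k _ _ _ (expR_gt0 (n%:R * b)) l1p l2p l2le.
exists (code_of n k c (thr_dec n k (expR (n%:R * b)) c)).
split; [exact: err_prob_code_of_ge0 | exact: KL_code_of_ge0 |].
apply: le_trans hc _; apply: lerD; [apply: lerD|].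
- apply: expR_lnexpR_pow_le hY.
  by do 2![apply: sumr_ge0 => ? _]; rewrite !mulr_ge0 ?WY_ge0 ?expR_ge0.
- exact: truncnS_expR_div_le.
- apply: expR_ln_truncnS_le hZ => //.
  by do 2![apply: sumr_ge0 => ? _]; rewrite !mulr_ge0 ?WZ_ge0 ?expR_ge0.
Qed.

Lemma exists_codes_geometric (r : R) :
  mutinfo (PXZ QS W PX) < r -> r < mutinfo (PXY QS W PX) ->
  exists (C q : R) (k : nat -> nat), [/\ `|q| < 1,
    forall n, 2 `^ (n%:R * r) <= (k n).+1%:R &
    forall n, exists c : sc_code S X Y n (k n).+1,
     [/\ 0 <= err_prob QS W c, 0 <= KL (PZn QS W c) (@Q0n R S X Y Z QS W x0 n) &
         err_prob QS W c + KL (PZn QS W c) (@Q0n R S X Y Z QS W x0 n) <= C * q ^+ n]].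
Proof.
move=> hz hy.
have ln2p : 0 < ln (2 : R) by rewrite ln_gt0 // ltr1n.
pose rho := r * ln 2.
pose Iy := ln 2 * mutinfo (PXY QS W PX).
pose Iz := ln 2 * mutinfo (PXZ QS W PX).
have Izrho : Iz < rho by rewrite /Iz /rho; nra.
have rhoIy : rho < Iy by rewrite /Iy /rho; nra.
have rho0 : 0 <= rho by have := mutinfoZ_ge0; rewrite /rho; nra.
(* [K = e^(n b)] is a decoding threshold strictly between [e^(n rho)] and [e^(n Iy)]. *)
pose b := (rho + Iy) / 2.
pose e1 := (Iy - b) / 2.
pose e2 := (rho - Iz) / 2.
have e1p : 0 < e1 by rewrite /e1 /b; lra.
have e2p : 0 < e2 by rewrite /e2; lra.
have [l1 [l1p _ hY]] := mgf_le_expR_meanD2 _ _ (fun x y => PX x * WY x y)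
   (fun x y => - infoY x y) e1 (fun x y => mulr_ge0 (PX_ge0 x) (WY_ge0 x y))
   sum_PX_WY e1p.
have [l2 [l2p l2le hZ]] := mgf_le_expR_meanD2 _ _ (fun x z => PX x * WZ x z) infoZ e2
   (fun x z => mulr_ge0 (PX_ge0 x) (WZ_ge0 x z)) sum_PX_WZ e2p.
have mY : \sum_x \sum_y PX x * WY x y * - infoY x y = - Iy.
  rewrite /Iy ln2_mutinfoY -sumrN; apply: eq_bigr => x _.
  by rewrite -sumrN; apply: eq_bigr => y _; rewrite mulrN.
rewrite mY in hY; rewrite -ln2_mutinfoZ -/Iz in hZ.
pose q1 := expR (l1 * (b + (- Iy + e1))).
pose q2 := expR (rho - b).
pose q3 := expR (l2 * (Iz + e2 - rho)).
pose q := Num.max q1 (Num.max q2 q3).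
have q_ge0 : 0 <= q by rewrite /q !le_max expR_ge0.
exists (3 + l2^-1), q, (fun n => Num.truncn (expR (n%:R * rho))); split.
- rewrite ger0_norm // !gt_max !expR_lt1 !pmulr_rlt0 // /e1 /e2 /b.
  by apply/and3P; split; lra.
- move=> n; rewrite /powR; case: eqP => [/eqP|_]; first by rewrite pnatr_eq0.
  by rewrite -mulrA -/rho ltW ?truncnS_gt.
move=> n.
have [c [err0 KL0 hc]] := exists_code_exp_bound _ b _ _ _ _ n rho0 l1p l2p l2le hY hZ.
exists c; split => //; apply: le_trans hc _.
have qn_le a : 0 <= a -> a <= q -> a ^+ n <= q ^+ n.
  by move=> a0 aq; rewrite lerXn2r ?nnegrE.
have := qn_le q1 (expR_ge0 _); rewrite /q !le_max lexx => /(_ isT).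
have := qn_le q2 (expR_ge0 _); rewrite /q !le_max lexx orbT => /(_ isT).
have := qn_le q3 (expR_ge0 _); rewrite /q !le_max lexx !orbT => /(_ isT).
have : 0 <= l2^-1 by rewrite invr_ge0 ltW.
rewrite -/q1 -/q2 -/q3; nra.
Qed.

Lemma achievable_between (r : R) :
  mutinfo (PXZ QS W PX) < r -> r < mutinfo (PXY QS W PX) -> achievable QS W x0 r.
Proof.
move=> hz hy; have [C [q [k [hq hk hc]]]] := exists_codes_geometric r hz hy.
exact: achievable_of_geometric r C q _ hq hk hc.
Qed.
End Channel.

Theorem theorem11 (R : realType) (S X Y Z : finType) (QS : S -> R)
  (W : X -> S -> Y -> Z -> R) (x0 : X)
  (hQS : is_pmf QS) (hW : is_channel W)
  (hQ0 : forall z, 0 < Q0 QS W x0 z)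
  (rmax : R)
  (hmax : setS QS W x0 rmax /\ (forall r, setS QS W x0 r -> r <= rmax)) :
  (rmax%:E <= covert_capacity QS W x0)%E.
Proof.
have [[_ [PX [[hPX [hPZ hlt]] hr]]] _] := hmax.
apply/lee_addgt0Pr => e e0.
set Iy := mutinfo (PXY QS W PX) in hlt hr.
set Iz := mutinfo (PXZ QS W PX) in hlt.
pose d := Num.min (e / 2) ((Iy - Iz) / 2).
have d0 : 0 < d by rewrite lt_min; apply/andP; split; lra.
have de : d <= e / 2 by rewrite ge_min lexx.
have dI : d <= (Iy - Iz) / 2 by rewrite ge_min lexx orbT.
have ach : achievable QS W x0 (Iy - d).
  by apply: (achievable_between hQS hW hPX hPZ hQ0); rewrite -/Iy -/Iz; lra.
apply: (@le_trans _ _ ((Iy - d)%:E + e%:E)%E); first by rewrite -EFinD lee_fin; lra.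
by rewrite leeD2r // ereal_sup_ubound //; exists (Iy - d).
Qed.
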